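(* Let $G$ be a finite group of order $n$ and $f:G\to\mathbb{Q}$ a class function with $f(g)=f(g^{-1})$ for all $g\in G$. Then all eigenvalues of the Cayley colour graph $\Gamma_f=\operatorname{Cay}(G,f)$ are rational if and only if $f^h=f$ for all $h\in\mathbb{Z}_n^*$.
   Context: $\mathbb{Z}_n^*$ is the unit group of $\mathbb{Z}/n\mathbb{Z}$; $f^h(g)=f(g^h)$. The Cayley colour graph $\operatorname{Cay}(G,f)$ has vertex set $G$ and adjacency matrix $[f(gh^{-1})]_{g,h\in G}$; its eigenvalues are those of this matrix. *)

From HB Require Import structures.
From mathcomp Require Import all_boot all_order all_algebra all_fingroup all_field.
Set Implicit Arguments. Unset Strict Implicit. Unset Printing Implicit Defensive.
Import GRing.Theory Num.Theory.
Local Open Scope ring_scope.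

(* Adjacency matrix of the Cayley colour graph Cay(G, f), where the finite
   group G is the whole finGroupType gT, with vertices enumerated by
   enum_val : 'I_#|gT| -> gT. *)
Definition cayley_mx (gT : finGroupType) (f : gT -> rat) : 'M[algC]_#|gT| :=
  \matrix_(i, j) ratr (f (enum_val i * (enum_val j)^-1)%g).

From HB Require Import structures.
From mathcomp Require Import all_boot all_order all_algebra all_fingroup all_solvable all_field all_character.
From mathcomp Require Import ring.
Set Implicit Arguments. Unset Strict Implicit. Unset Printing Implicit Defensive.
Import GRing.Theory Num.Theory.
Local Open Scope ring_scope.

(* The matrix [f(g h^-1)] of a class function f is the matrix of multiplication
   by f in the group algebra, so the central idempotents e_chi diagonalise it,
   with eigenvalue |G| [f, chi] / chi(1) on e_chi.  An automorphism of algC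
   acting as z |-> z^k on |G|-th roots of unity maps chi(x) to chi(x^k), hence
   the eigenvalue for f to the one for f o (x |-> x^k') with k k' = 1 modulo
   the exponent.  As a class function is determined by these eigenvalues, they
   are all rational, i.e. fixed by every automorphism, exactly when f is
   invariant under the coprime power maps. *)

Lemma aut_unity_expn m (u : {rmorphism algC -> algC}) : (0 < m)%N ->
  exists2 k, coprime k m & forall z : algC, z ^+ m = 1 -> u z = z ^+ k.
Proof.
move=> m_gt0; have [e prim_e] := C_prim_root_exists m_gt0.
have prim_ue : m.-primitive_root (u e) by rewrite fmorph_primitive_root.
have [k Dk] := prim_rootP prim_e (prim_expr_order prim_ue).
exists (val k); first by rewrite -(prim_root_exp_coprime _ prim_e) -Dk.
move=> z /(prim_rootP prim_e)[j ->].
by rewrite rmorphXn Dk -!exprM mulnC.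
Qed.

Section CayleyColourGraph.

Variable gT : finGroupType.
Local Notation G := [set: gT].
Local Notation n := #|gT|.

Lemma natr_card_neq0 : (n%:R : algC) != 0.
Proof. by rewrite -cardsT neq0CG. Qed.

Definition convmx (phi : gT -> algC) : 'M[algC]_n :=
  \matrix_(i, j) phi (enum_val i * (enum_val j)^-1)%g.

Implicit Types (phi psi : 'CF(G)).

Lemma convmx_irrM (i j : Iirr G) :
  convmx 'chi_i *m convmx 'chi_j
    = ((i == j)%:R * (n%:R / 'chi_i 1%g)) *: convmx 'chi_i.
Proof.
apply/matrixP => a b; rewrite !mxE; set y := (enum_val a * _)%g.
have -> : \sum_c convmx 'chi_i a c * convmx 'chi_j c b
          = \sum_x 'chi_i (x * y)%g * 'chi_j x^-1%g.
  under eq_bigr do rewrite !mxE.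
  rewrite -(big_enum_val (fun x => 'chi_i (enum_val a * x^-1)%g
                                  * 'chi_j (x * (enum_val b)^-1)%g)).
  have shift_inj : injective (fun x => x^-1 * enum_val b)%g.
    by move=> x1 x2 /mulIg /invg_inj.
  rewrite (reindex_inj shift_inj) /=; apply: eq_big => [x|x _].
    by rewrite !inE.
  rewrite invMg invgK -mulgA mulgV mulg1 -(cfunJ _ (x * y)%g (in_setT x)).
  by rewrite /conjg /y -!mulgA mulKg.
have := generalized_orthogonality_relation y i j.
rewrite cardsT (eq_bigl xpredT) => [orth|x]; last by rewrite inE.
apply: (mulfI (invr_neq0 natr_card_neq0)); rewrite orth.
have chi1_nz := irr1_neq0 i; have n_nz := natr_card_neq0.
by case: (i == j); [field; rewrite chi1_nz n_nz | rewrite !mul0r mulr0].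
Qed.

(* The matrix of the central primitive idempotent of the group algebra
   afforded by chi_i. *)
Definition irr_idem_mx (i : Iirr G) : 'M[algC]_n :=
  ('chi_i 1%g / n%:R) *: convmx 'chi_i.

Lemma irr_idem_mxM i j :
  irr_idem_mx i *m irr_idem_mx j = (i == j)%:R *: irr_idem_mx i.
Proof.
rewrite /irr_idem_mx -scalemxAl -scalemxAr convmx_irrM !scalerA.
have chi1_nz := irr1_neq0 i; have n_nz := natr_card_neq0.
case: eqVneq => [<-|_]; last by rewrite !mul0r mulr0 !scale0r.
by congr (_ *: _); field; rewrite chi1_nz n_nz.
Qed.

Lemma sum_irr_idem_mx : \sum_i irr_idem_mx i = 1%:M.
Proof.
apply/matrixP => a b; rewrite summxE !mxE.
transitivity (n%:R^-1 * cfReg G (enum_val a * (enum_val b)^-1)%g).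
  rewrite cfReg_sum sum_cfunE mulr_sumr; apply: eq_bigr => j _.
  by rewrite !mxE cfunE mulrAC mulrC.
rewrite cfRegE cardsT -(inj_eq enum_val_inj) -eq_mulgV1.
by case: eqP; rewrite ?mulr0 ?mulVf ?natr_card_neq0.
Qed.

Definition cf_eigen (phi : 'CF(G)) (i : Iirr G) : algC :=
  '[phi, 'chi_i] * n%:R / 'chi_i 1%g.

Lemma cf_eigenE phi i :
  cf_eigen phi i = (\sum_x phi x * 'chi_i x^-1%g) / 'chi_i 1%g.
Proof.
rewrite /cf_eigen cfdotE cardsT (eq_bigl xpredT) => [|x]; last by rewrite inE.
under eq_bigr do rewrite -irr_inv.
have chi1_nz := irr1_neq0 i; have n_nz := natr_card_neq0.
by field; rewrite chi1_nz n_nz.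
Qed.

Lemma cf_eigen_inj phi psi :
  (forall i, cf_eigen phi i = cf_eigen psi i) -> phi = psi.
Proof.
move=> eq_eigen; rewrite [phi]cfun_sum_cfdot [psi]cfun_sum_cfdot.
apply: eq_bigr => i _; congr (_ *: _).
have := eq_eigen i; rewrite /cf_eigen => /(mulIf (invr_neq0 (irr1_neq0 i))).
by move/(mulIf natr_card_neq0).
Qed.

Lemma convmx_spectral phi :
  convmx phi = \sum_i cf_eigen phi i *: irr_idem_mx i.
Proof.
apply/matrixP => a b; rewrite summxE !mxE.
rewrite {1}[phi]cfun_sum_cfdot sum_cfunE; apply: eq_bigr => i _.
rewrite !mxE cfunE /cf_eigen.
have chi1_nz := irr1_neq0 i; have n_nz := natr_card_neq0.
by field; rewrite chi1_nz n_nz.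
Qed.

Lemma irr_idem_mx_convmx phi j :
  irr_idem_mx j *m convmx phi = cf_eigen phi j *: irr_idem_mx j.
Proof.
rewrite convmx_spectral mulmx_sumr (bigD1 j) //= big1 ?addr0 => [|i ij].
  by rewrite -scalemxAr irr_idem_mxM eqxx scale1r.
by rewrite -scalemxAr irr_idem_mxM eq_sym (negPf ij) scale0r scaler0.
Qed.

Lemma convmx_irr_idem_mx phi j :
  convmx phi *m irr_idem_mx j = cf_eigen phi j *: irr_idem_mx j.
Proof.
rewrite convmx_spectral mulmx_suml (bigD1 j) //= big1 ?addr0 => [|i ij].
  by rewrite -scalemxAl irr_idem_mxM eqxx scale1r.
by rewrite -scalemxAl irr_idem_mxM (negPf ij) scale0r scaler0.
Qed.

Lemma eigenvalue_convmxP phi a :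
  eigenvalue (convmx phi) a <-> exists i, a = cf_eigen phi i.
Proof.
split=> [/eigenvalueP[v Dv nz_v] | [i ->]].
  have [/existsP[j /eqP]|/existsPn not_eigen] :=
    boolP [exists j, a == cf_eigen phi j]; first by exists j.
  case/negP: nz_v; apply/eqP.
  rewrite -[v]mulmx1 -sum_irr_idem_mx mulmx_sumr big1 // => j _.
  have: (a - cf_eigen phi j) *: (v *m irr_idem_mx j) = 0.
    by rewrite scalerBl scalemxAl -Dv -mulmxA convmx_irr_idem_mx scalemxAr subrr.
  by move/eqP; rewrite scaler_eq0 subr_eq0 (negPf (not_eigen j)) => /eqP.
apply/eigenvalueP; pose k := enum_rank (1%g : gT).
exists (row k (irr_idem_mx i)).
  by rewrite -row_mul irr_idem_mx_convmx; apply/rowP => m; rewrite !mxE.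
apply/eqP => /rowP /(_ k); rewrite !mxE enum_rankK mulgV.
apply/eqP; rewrite !mulf_neq0 ?invr_neq0 ?irr1_neq0 //; exact: natr_card_neq0.
Qed.

Lemma expgn_coprimeK k :
  coprime k n -> cancel (fun x : gT => x ^+ k)%g (fun x => x ^+ expg_invn G k)%g.
Proof.
rewrite coprime_sym -cardsT => co_k x.
exact: (@expgK _ [set: gT]%G k co_k x (in_setT x)).
Qed.

Fact cf_of_class_subproof (F : gT -> algC) :
  (forall x y, F (x ^ y)%g = F x) -> is_class_fun <<G>>%g [ffun x => F x].
Proof.
by move=> FJ; rewrite genGid; apply: intro_class_fun => [x y _ _|x]; rewrite ?FJ ?inE.
Qed.

Definition cf_of_class F FJ : 'CF(G) := Cfun 0 (@cf_of_class_subproof F FJ).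

Lemma cf_of_classE F FJ x : @cf_of_class F FJ x = F x.
Proof. exact: cfunE. Qed.

Fact cfAdams_subproof k phi x y : phi ((x ^ y) ^+ k)%g = phi (x ^+ k)%g.
Proof. by rewrite -conjXg cfunJ ?inE. Qed.

Definition cfAdams k phi : 'CF(G) := cf_of_class (cfAdams_subproof k phi).

Lemma aut_char_expg (chi : 'CF(G)) (u : {rmorphism algC -> algC}) k :
    chi \is a character -> (forall z : algC, z ^+ n = 1 -> u z = z ^+ k) ->
  forall x, u (chi x) = chi (x ^+ k)%g.
Proof.
(* chi x is the sum of the eigenvalues of a representing matrix of x, all of
   them |G|-th roots of unity. *)
move=> /char_reprP[rG ->] u_unity x.
have [e [[B uB rGx] [e_order _] [-> _] _]] := repr_rsim_diag rG (in_setT x).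
have rGX m : rG (x ^+ m)%g = invmx B *m diag_mx (\row_j (e 0 j ^+ m)) *m B.
  elim: m => [|m IHm].
    have -> : diag_mx (\row_j (e 0 j ^+ 0)) = 1%:M.
      by rewrite -diag_const_mx; congr diag_mx; apply/rowP => j; rewrite !mxE.
    by rewrite expg0 repr_mx1 mulmx1 mulVmx.
  rewrite expgS repr_mxM ?in_setT // rGx IHm -!mulmxA mulKVmx //.
  rewrite (mulmxA (diag_mx e)) mulmx_diag mulmxA -mulmxA.
  by congr (invmx B *m (diag_mx _ *m B)); apply/rowP => j; rewrite !mxE exprS.
rewrite cfunE in_setT mulr1n rGX mxtrace_mulC mulKVmx // mxtrace_diag.
rewrite rmorph_sum; apply: eq_bigr => j _; rewrite mxE u_unity //.
have /dvdnP[q ->] : (#[x]%g %| n)%N by rewrite -cardsT order_dvdG ?in_setT.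
by rewrite mulnC exprM e_order expr1n.
Qed.

Lemma aut_cf_eigen phi psi (u : {rmorphism algC -> algC}) k i :
    coprime k n -> (forall z : algC, z ^+ n = 1 -> u z = z ^+ k) ->
    (forall x, phi x \in Crat) -> (forall x, psi (x ^+ k)%g = phi x) ->
  u (cf_eigen phi i) = cf_eigen psi i.
Proof.
move=> co_k u_unity phi_rat psi_phi.
have u_chi := aut_char_expg (irr_char i) u_unity.
rewrite !cf_eigenE fmorph_div rmorph_sum u_chi expg1n; congr (_ / _).
rewrite [RHS](reindex_inj (can_inj (expgn_coprimeK co_k))) /=.
by apply: eq_bigr => x _; rewrite rmorphM aut_Crat // u_chi expVgn psi_phi.
Qed.

Lemma cf_eigen_Crat phi i :
    (forall x, phi x \in Crat) ->
    (forall nu : {rmorphism algC -> algC}, nu (cf_eigen phi i) = cf_eigen phi i) ->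
  cf_eigen phi i \in Crat.
Proof.
move=> phi_rat nu_fixed.
(* Lift the eigenvalue to a Galois number field containing all character
   values; there, being fixed by every automorphism means being rational. *)
have [Qn galQn [QnC gQnC [_ _ QnG]]] := group_num_field_exists G.
have lift_chi y : {a | QnC a = 'chi_i y}.
  exact: QnG (irr_char i) y (order_dvdG (in_setT y)).
pose a y := sval (lift_chi y).
pose b := (\sum_x ratr (getCrat (phi x)) * a x^-1%g) / a 1%g.
have Db : QnC b = cf_eigen phi i.
  rewrite cf_eigenE fmorph_div rmorph_sum (svalP (lift_chi _)); congr (_ / _).
  apply: eq_bigr => x _.
  by rewrite rmorphM fmorph_rat (svalP (lift_chi _)) getCratK.
have: b \in fixedField 'Gal({:Qn} / 1%AS)%g.
  apply/fixedFieldP; first exact: memvf.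
  move=> s _; have [nu Dnu] := gQnC s.
  by apply: (fmorph_inj QnC); rewrite Dnu Db nu_fixed.
rewrite (galois_fixedField galQn) => /vlineP[r Dr].
by rewrite -Db Dr rmorphZ_num rmorph1 mulr1 Crat_rat.
Qed.

End CayleyColourGraph.

Theorem mainTheorem7 (gT : finGroupType) (f : gT -> rat)
  (f_class : forall x y : gT, f (x ^ y)%g = f x)
  (f_sym : forall x : gT, f (x^-1)%g = f x) :
  (forall lambda : algC, eigenvalue (cayley_mx f) lambda -> lambda \in Crat)
  <->
  (forall h : nat, coprime h #|gT| -> forall g : gT, f (g ^+ h)%g = f g).
Proof.
have fJ x y : ratr (f (x ^ y)%g) = ratr (f x) :> algC by rewrite f_class.
pose phi := cf_of_class fJ.
have phi_rat x : phi x \in Crat by rewrite cf_of_classE Crat_rat.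
have -> : cayley_mx f = convmx phi.
  by apply/matrixP => a b; rewrite !mxE cf_of_classE.
split=> [eigen_rat h co_h g | f_pow _ /eigenvalue_convmxP[i ->]].
- have [u u_unity] := Qn_aut_exists co_h.
  pose psi := cfAdams (expg_invn [set: gT] h) phi.
  have psi_phi x : psi (x ^+ h)%g = phi x by rewrite cf_of_classE expgn_coprimeK.
  have psi_eq : psi = phi.
    apply: cf_eigen_inj => i; rewrite -(aut_cf_eigen i co_h u_unity phi_rat psi_phi).
    by apply: aut_Crat; apply: eigen_rat; apply/eigenvalue_convmxP; exists i.
  have := psi_phi g; rewrite psi_eq !cf_of_classE.
  by move/fmorph_inj.
- apply: (cf_eigen_Crat phi_rat) => nu.
  have n_gt0 : (0 < #|gT|)%N by rewrite -cardsT cardG_gt0.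
  have [k co_k nu_unity] := aut_unity_expn nu n_gt0.
  apply: (aut_cf_eigen i co_k) nu_unity phi_rat _ => x.
  by rewrite !cf_of_classE f_pow.
Qed.
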